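(* Every unweighted instance $(H,U,k)$ of the atomic two-stage facility location game (i.e. $w(v)=1$ for all $v\in V$; the feasibility sets $U(f)$ may be arbitrary) admits a subgame perfect equilibrium $(\mathbf{s},\sigma)$ in which the full client profile $\sigma$ is a full client equilibrium consisting of pure client profiles (i.e. $\sigma(\mathbf{s}')_{v,f}\in\{0,1\}$ for all FPPs $\mathbf{s}'$, clients $v$ and facilities $f$).
   Context: Atomic two-stage facility location game. An instance is a triple $(H,U,k)$: $H=(V,E,w)$ is a finite directed graph with vertex weights $w:V\to\mathbb{Q}_{>0}$; $F$ is a set of $k$ facility agents; $U:F\to 2^V$ assigns to each facility agent $f$ a set $U(f)\subseteq V$ of feasible locations. The vertices are simultaneously the clients and the possible locations. The instance is unweighted if $w(v)=1$ for all $v$. A facility placement profile (FPP) is a vector $\mathbf{s}=(s_f)_{f\in F}$ with $s_f\in U(f)$ (several facilities may choose the same vertex); $S$ denotes the set of all FPPs. For a client $v$ let $N(v)=\{v\}\cup\{u:(v,u)\in E\}$ and $N_{\mathbf{s}}(v)=\{f\in F: s_f\in N(v)\}$. A client profile for $\mathbf{s}$ is $\sigma(\mathbf{s})$, assigning to each client $v$ numbers $\sigma(\mathbf{s})_{v,f}\in[0,1]$ ($f\in F$) with $\sigma(\mathbf{s})_{v,f}=0$ for $f\notin N_{\mathbf{s}}(v)$ and $\sum_{f\in N_{\mathbf{s}}(v)}\sigma(\mathbf{s})_{v,f}=1$ whenever $N_{\mathbf{s}}(v)\neq\varnothing$ (a probability distribution over available facilities). A full client profile $\sigma$ specifies a client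 profile $\sigma(\mathbf{s}')$ for every $\mathbf{s}'\in S$. The load of facility $f$ is $\ell_f(\mathbf{s},\sigma)=\sum_{v\in V}\sigma(\mathbf{s})_{v,f}w(v)$. The cost of client $v$ is $L_v(\mathbf{s},\sigma)=w(v)+\sum_{f\in N_{\mathbf{s}}(v)}\sigma(\mathbf{s})_{v,f}\,\ell_{-v,f}(\mathbf{s},\sigma)$ where $\ell_{-v,f}(\mathbf{s},\sigma)=\sum_{u\neq v}\sigma(\mathbf{s})_{u,f}w(u)$. $\sigma(\mathbf{s})$ is a client equilibrium if no client $v$ can strictly decrease $L_v$ by unilaterally changing her own distribution to another feasible one; $\sigma$ is a full client equilibrium if $\sigma(\mathbf{s}')$ is a client equilibrium for every $\mathbf{s}'\in S$. A pair $(\mathbf{s},\sigma)$ is a subgame perfect equilibrium (SPE) if $\sigma$ is a full client equilibrium and there is no facility $f$ and location $s'_f\in U(f)$ with $\ell_f((s'_f,\mathbf{s}_{-f}),\sigma)>\ell_f(\mathbf{s},\sigma)$. *)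

From mathcomp Require Import all_boot all_order all_algebra.
Set Implicit Arguments. Unset Strict Implicit. Unset Printing Implicit Defensive.
Import Order.TTheory GRing.Theory Num.Theory.
Local Open Scope ring_scope.

Section FLG.
Variables (V F : finType).

(* directed graph H = (V, E, w): E : rel V, w : V -> rat *)

Definition Nbh (E : rel V) (v : V) : pred V := fun u => (u == v) || E v u.

Definition is_fpp (U : F -> {set V}) (s : {ffun F -> V}) : Prop :=
  forall f, s f \in U f.

Definition Ns (E : rel V) (s : {ffun F -> V}) (v : V) : {set F} :=
  [set f | Nbh E v (s f)].

Definition valid_dist (E : rel V) (s : {ffun F -> V}) (v : V) (p : F -> rat) : Prop :=
  (forall f, 0 <= p f <= 1) /\
  (forall f, f \notin Ns E s v -> p f = 0) /\
  (Ns E s v != set0 -> \sum_(f in Ns E s v) p f = 1).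

(* client profile for s: c v f = sigma(s)_{v,f} *)
Definition is_client_profile (E : rel V) (s : {ffun F -> V}) (c : V -> F -> rat) : Prop :=
  forall v, valid_dist E s v (c v).

Definition load (w : V -> rat) (c : V -> F -> rat) (f : F) : rat :=
  \sum_(v : V) c v f * w v.

Definition load_minus (w : V -> rat) (c : V -> F -> rat) (v : V) (f : F) : rat :=
  \sum_(u : V | u != v) c u f * w u.

Definition cost (E : rel V) (w : V -> rat) (s : {ffun F -> V})
    (c : V -> F -> rat) (v : V) : rat :=
  w v + \sum_(f in Ns E s v) c v f * load_minus w c v f.

Definition set_row (c : V -> F -> rat) (v : V) (p : F -> rat) : V -> F -> rat :=
  fun u => if u == v then p else c u.

Definition client_eq (E : rel V) (w : V -> rat) (s : {ffun F -> V})
    (c : V -> F -> rat) : Prop :=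
  is_client_profile E s c /\
  forall v p, valid_dist E s v p -> ~ (cost E w s (set_row c v p) v < cost E w s c v).

Definition full_client_eq (E : rel V) (w : V -> rat) (U : F -> {set V})
    (sigma : {ffun F -> V} -> V -> F -> rat) : Prop :=
  forall s, is_fpp U s -> client_eq E w s (sigma s).

Definition upd (s : {ffun F -> V}) (f : F) (x : V) : {ffun F -> V} :=
  [ffun g => if g == f then x else s g].

Definition is_SPE (E : rel V) (w : V -> rat) (U : F -> {set V})
    (s : {ffun F -> V}) (sigma : {ffun F -> V} -> V -> F -> rat) : Prop :=
  is_fpp U s /\ full_client_eq E w U sigma /\
  forall f x, x \in U f -> ~ (load w (sigma s) f < load w (sigma (upd s f x)) f).

Definition pure_full_profile (U : F -> {set V})
    (sigma : {ffun F -> V} -> V -> F -> rat) : Prop :=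
  forall s, is_fpp U s -> forall v f, sigma s v f = 0 \/ sigma s v f = 1.

End FLG.

(* Pure client assignments are compared through the potential
   sum_k (#|F|+2)^(#|V| - load k).  Moving a client to a facility that is at
   least two units lighter strictly decreases it, so its minimisers are client
   equilibria.  Fix a placement s and an assignment a minimising the potential
   over all placements.  In each subgame the clients play an equilibrium, and
   after a unilateral deviation of f the one minimising the load of f.  Some
   equilibrium z of that subgame (minimal potential, then minimal load on f)
   leaves f no heavier than under a: otherwise every facility reachable from f
   by handing clients over in z is heavier than f was under a (else shifting
   clients along a shortest such path would unload f without raising the
   potential), and letting the clients of a stay on the unreachable facilities
   yields an assignment of potential smaller than that of a. *)

From mathcomp Require Import all_boot all_order all_algebra.
From mathcomp Require Import zify.
Set Implicit Arguments. Unset Strict Implicit. Unset Printing Implicit Defensive.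
Import Order.TTheory GRing.Theory Num.Theory.

Section Potential.
Variables (F : finType) (K : nat).
Implicit Types l : F -> nat.

Local Notation B := #|F|.+2.

(* As B > #|F|, a single term B ^ (K - L) outweighs all terms of smaller
   exponent together (pot_lt_dominated). *)
Definition pot l : nat := \sum_k B ^ (K - l k).

Lemma pot_transfer_eq l l' h g :
    (forall k, l' k + (k == h) = l k + (k == g)) -> l g < l h <= K ->
  pot l' + (B ^ (K - l h) + B * B ^ (K - l g).-1)
    = pot l + (B * B ^ (K - l h) + B ^ (K - l g).-1).
Proof.
move=> ll' /andP[ghl hK]; have hg : h != g by apply: contraTneq ghl => ->; rewrite ltnn.
have l'h := ll' h; have l'g := ll' g; rewrite eqxx (negbTE hg) in l'h.
rewrite eq_sym (negbTE hg) eqxx in l'g.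
have split2 m : \sum_k B ^ (K - m k) =
    B ^ (K - m h) + B ^ (K - m g) + \sum_(k | (k != h) && (k != g)) B ^ (K - m k).
  by rewrite (bigD1 h) // (bigD1 g) 1?eq_sym //= addnA.
rewrite /pot !split2.
set rest := \sum_(k | (k != h) && (k != g)) B ^ (K - l k).
have -> : \sum_(k | (k != h) && (k != g)) B ^ (K - l' k) = rest.
  apply: eq_bigr => k /andP[/negbTE kh /negbTE kg].
  by have := ll' k; rewrite kh kg !addn0 => ->.
set d := (K - l g).-1.
have -> : K - l' h = (K - l h).+1 by lia.
have -> : K - l' g = d by lia.
have -> : K - l g = d.+1 by lia.
rewrite !expnS; lia.
Qed.

Lemma pot_transfer_le l l' h g :
    (forall k, l' k + (k == h) = l k + (k == g)) -> l g < l h <= K ->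
  pot l' <= pot l.
Proof.
move=> ll' lhK; have := pot_transfer_eq ll' lhK; case/andP: lhK => gh hK.
have : B ^ (K - l h) <= B ^ (K - l g).-1 by apply: leq_pexp2l => //; lia.
nia.
Qed.

Lemma pot_transfer_lt l l' h g :
    (forall k, l' k + (k == h) = l k + (k == g)) -> (l g).+1 < l h <= K ->
  pot l' < pot l.
Proof.
move=> ll' /andP[gh hK]; have lhK : l g < l h <= K by rewrite hK andbT; lia.
have := pot_transfer_eq ll' lhK.
have : B * B ^ (K - l h) <= B ^ (K - l g).-1 by rewrite -expnS; apply: leq_pexp2l => //; lia.
have : 0 < B ^ (K - l h) by rewrite expn_gt0.
nia.
Qed.

Lemma pot_lt_dominated l l' f :
    l' f <= K -> l f < l' f -> (forall h, l f < l' h \/ l h <= l' h) ->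
  pot l' < pot l.
Proof.
move=> l'fK lf dom; set L := l f; set high := fun h => L < l' h.
rewrite /pot (bigID high) [X in _ < X](bigID high) /=.
have high_small : \sum_(h | high h) B ^ (K - l' h) <= #|F| * B ^ (K - L.+1).
  apply: leq_trans (_ : \sum_(h | high h) B ^ (K - L.+1) <= _).
    by apply: leq_sum => h hh; apply: leq_pexp2l => //; rewrite /high in hh; lia.
  by rewrite sum_nat_const leq_mul2r max_card orbT.
have low_le : \sum_(h | ~~ high h) B ^ (K - l' h) <= \sum_(h | ~~ high h) B ^ (K - l h).
  apply: leq_sum => h /negP hh; apply: leq_pexp2l => //.
  by case: (dom h) => [/hh // | ?]; lia.
have f_big : B * B ^ (K - L.+1) <= \sum_(h | high h) B ^ (K - l h).
  have -> : B * B ^ (K - L.+1) = B ^ (K - l f) by rewrite -expnS; congr (_ ^ _); lia.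
  by rewrite (bigD1 f) ?leq_addr.
rewrite -addSn leq_add //; apply: leq_ltn_trans high_small (leq_trans _ f_big).
by rewrite ltn_pmul2r ?expn_gt0.
Qed.

End Potential.

Section Assignments.
Variables (V F : finType).
Implicit Types (a z : {ffun V -> option F}) (v : V) (h g k : F).

Definition nload a k : nat := \sum_u (a u == Some k).

Definition phi a : nat := pot #|V| (nload a).

Definition reassign a v (o : option F) : {ffun V -> option F} :=
  [ffun u => if u == v then o else a u].

Lemma nload_le_card a k : nload a k <= #|V|.
Proof. by rewrite -sum1_card; apply: leq_sum => u _; apply: leq_b1. Qed.

Lemma nload_reassign a v h g :
  a v = Some h -> forall k, nload (reassign a v (Some g)) k + (k == h) = nload a k + (k == g).
Proof.
move=> av k; rewrite /nload (bigD1 v) // [in RHS](bigD1 v) //= ffunE eqxx av.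
rewrite [Some g == _]eq_sym [Some h == _]eq_sym !(inj_eq (@Some_inj _)).
have -> : \sum_(u | u != v) (reassign a v (Some g) u == Some k)
        = \sum_(u | u != v) (a u == Some k).
  by apply: eq_bigr => u /negbTE uv; rewrite ffunE uv.
lia.
Qed.

Variables (E : rel V) (s : {ffun F -> V}).

(* Pure client profiles are assignments [V -> option F], with [None] only for
   clients that have no facility in reach. *)
Definition feasible a : bool :=
  [forall v, if a v is Some g then g \in Ns E s v else Ns E s v == set0].

(* A client on h pays nload a h; on g it would pay (nload a g).+1. *)
Definition stable a : bool :=
  [forall v, forall h, forall g,
     (a v == Some h) ==> (g \in Ns E s v) ==> (nload a h <= (nload a g).+1)].

Definition equilibrium a : bool := feasible a && stable a.

Definition handover a : rel F :=
  fun h g => [exists v, (a v == Some h) && (g \in Ns E s v)].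

Lemma feasible_some a v h : feasible a -> a v = Some h -> h \in Ns E s v.
Proof. by move=> /forallP/(_ v) /[swap] ->. Qed.

Lemma feasible_none a v : feasible a -> a v = None -> Ns E s v = set0.
Proof. by move=> /forallP/(_ v) /[swap] -> /eqP. Qed.

Lemma stableP a :
  reflect (forall v h g, a v = Some h -> g \in Ns E s v -> nload a h <= (nload a g).+1)
          (stable a).
Proof.
apply: (iffP forallP) => [st v h g av vg | st v].
  by move: (st v) => /forallP/(_ h)/forallP/(_ g); rewrite av eqxx vg.
by apply/forallP => h; apply/forallP => g; apply/implyP => /eqP av; apply/implyP; apply: st.
Qed.

Lemma feasible_exists : exists a, feasible a.
Proof.
exists [ffun v => [pick g in Ns E s v]]; apply/forallP => v; rewrite ffunE.
case: pickP => [g //| none]; apply/eqP/setP => g.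
by rewrite in_set0 none.
Qed.

Lemma feasible_reassign a v g : feasible a -> g \in Ns E s v -> feasible (reassign a v (Some g)).
Proof.
move=> /forallP fa vg; apply/forallP => u; rewrite ffunE.
by case: (u =P v) => [->|_].
Qed.

Lemma handover_reassign a v o h x y :
  a v = Some h -> x != h -> handover a x y -> handover (reassign a v o) x y.
Proof.
move=> av xh /existsP[u /andP[/eqP au uy]]; apply/existsP; exists u.
have uv : u != v by apply: contraNneq xh => uv; move: au; rewrite uv av => -[->].
by rewrite ffunE (negbTE uv) au eqxx.
Qed.

Lemma stable_of_phi_min z :
  feasible z -> (forall z2, feasible z2 -> phi z <= phi z2) -> stable z.
Proof.
move=> fz zmin; apply/stableP => v h g zv vg; rewrite leqNgt; apply/negP => gap.
have := zmin _ (feasible_reassign fz vg); apply/negP; rewrite -ltnNge.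
by apply: pot_transfer_lt (nload_reassign g zv) _; rewrite gap nload_le_card.
Qed.

Lemma equilibrium_exists : exists z, equilibrium z.
Proof.
have [z0 fz0] := feasible_exists.
case: (arg_minnP phi fz0) => z fz zmin; exists z.
by rewrite /equilibrium fz (stable_of_phi_min fz zmin).
Qed.

Lemma lex_min_exists f : exists z, [/\ feasible z,
  forall z2, feasible z2 -> phi z <= phi z2 &
  forall z2, feasible z2 -> phi z2 <= phi z -> nload z f <= nload z2 f].
Proof.
have [z0 fz0] := feasible_exists.
case: (arg_minnP phi fz0) => z1 fz1 z1min.
pose phi_min := [pred z | feasible z && (phi z <= phi z1)].
have phi_min_z1 : phi_min z1 by rewrite /= fz1 leqnn.
case: (arg_minnP (nload^~ f) phi_min_z1) => z /andP[fz zz1] zmin.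
exists z; split=> // [z2 fz2|z2 fz2 z2z].
  exact: leq_trans zz1 (z1min _ fz2).
by apply: zmin; rewrite /= fz2 (leq_trans z2z zz1).
Qed.

Lemma handover_path_shift z h p :
    feasible z -> path (handover z) h p -> uniq (h :: p) ->
  exists2 z2, feasible z2 & forall k, nload z2 k + (k == h) = nload z k + (k == last h p).
Proof.
elim: p z h => [|g p IHp] z h fz; first by exists z.
move=> /= /andP[/existsP[v /andP[/eqP zv vg]] gp] /andP[hNgp uq].
have [|z2 fz2 shift2] := IHp _ g (feasible_reassign fz vg) _ uq.
  apply: (sub_in_path (P := predC1 h) _ _ gp) => [x y /= xh _|].
    exact: handover_reassign zv xh.
  by apply/allP => y yp /=; apply: contraNneq hNgp => <-.
exists z2 => // k; have := nload_reassign g zv k; have := shift2 k; lia.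
Qed.

Lemma connect_handover_load f z h :
    feasible z -> (forall z2, feasible z2 -> phi z <= phi z2) ->
    (forall z2, feasible z2 -> phi z2 <= phi z -> nload z f <= nload z2 f) ->
  connect (handover z) f h -> nload z f <= nload z h.
Proof.
move=> fz zmin zfmin /connectP[p fp ->]; case: (shortenP fp) => q fq uq _.
rewrite leqNgt; apply/negP => lower.
have [z2 fz2 shift] := handover_path_shift fz fq uq.
have phi2 : phi z2 <= phi z.
  by apply: pot_transfer_le shift _; rewrite lower nload_le_card.
have := zfmin _ fz2 phi2; have := shift f; rewrite eqxx.
have -> : (f == last f q) = false by apply/eqP => e; rewrite -e ltnn in lower.
lia.
Qed.

End Assignments.

Section Splice.
Variables (V F : finType) (E : rel V) (s s' : {ffun F -> V}).
Variables (a z : {ffun V -> option F}) (R : {set F}).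
Hypotheses (fa : feasible E s a) (fz : feasible E s' z).
Hypothesis s'_out : forall h, h \notin R -> s' h = s h.
Hypothesis R_closed : forall h g, h \in R -> handover E s' z h g -> g \in R.

(* Since R is closed under the handovers of z, no client that z puts on R is
   diverted by following a outside R. *)
Definition splice : {ffun V -> option F} :=
  [ffun v => if a v is Some h then (if h \in R then z v else Some h) else z v].

Lemma feasible_splice : feasible E s' splice.
Proof.
apply/forallP => v; rewrite ffunE; case av: (a v) => [h|]; last exact: (forallP fz).
case: ifP => hR; first exact: (forallP fz).
by move: (feasible_some fa av); rewrite !inE s'_out ?hR.
Qed.

Lemma nload_splice_in h : h \in R -> nload z h <= nload splice h.
Proof.
move=> hR; apply: leq_sum => u _; case: eqP => // zu; rewrite ffunE.
case au: (a u) => [k|]; last by rewrite zu eqxx.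
case: ifP => [_|/negbT kR]; first by rewrite zu eqxx.
suff : k \in R by rewrite (negbTE kR).
apply: R_closed hR _; apply/existsP; exists u; rewrite zu eqxx /=.
by move: (feasible_some fa au); rewrite !inE s'_out.
Qed.

Lemma nload_splice_out h : h \notin R -> nload a h <= nload splice h.
Proof.
move=> hR; apply: leq_sum => u _; case: eqP => // au.
by rewrite ffunE au (negbTE hR) eqxx.
Qed.

End Splice.

Section Deviation.
Variables (V F : finType) (E : rel V) (U : F -> {set V}).

Lemma phi_min_placement_exists : (forall f, U f != set0) ->
  exists s a, [/\ is_fpp U s, feasible E s a &
    forall s2 a2, is_fpp U s2 -> feasible E s2 a2 -> phi a <= phi a2].
Proof.
move=> U_nonempty.
have [s0 s0U] : exists s0 : {ffun F -> V}, [forall f, s0 f \in U f].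
  have someU f : exists x, x \in U f by apply/set0Pn; exact: U_nonempty.
  by exists [ffun f => xchoose (someU f)]; apply/forallP => f; rewrite ffunE; apply: xchooseP.
have [a0 fa0] := feasible_exists E s0.
pose placed := [pred p : {ffun F -> V} * {ffun V -> option F} |
                [forall f, p.1 f \in U f] && feasible E p.1 p.2].
have placed0 : placed (s0, a0) by rewrite /= s0U.
case: (arg_minnP (fun p => phi p.2) placed0) => -[s a] /andP[/forallP sU fa] a_min.
exists s, a; split=> // s2 a2 s2U fa2.
by apply: (a_min (s2, a2)); rewrite /= fa2 andbT; apply/forallP.
Qed.

Variables (s : {ffun F -> V}) (a : {ffun V -> option F}).
Hypotheses (sU : is_fpp U s) (fa : feasible E s a).
Hypothesis a_min : forall s2 a2, is_fpp U s2 -> feasible E s2 a2 -> phi a <= phi a2.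

Lemma deviation_equilibrium f x : x \in U f ->
  exists2 z, equilibrium E (upd s f x) z & nload z f <= nload a f.
Proof.
move=> xU; set s' := upd s f x.
have s'U : is_fpp U s' by move=> g; rewrite ffunE; case: eqP => [-> | _]; [exact: xU | exact: sU].
have [z [fz zmin zfmin]] := lex_min_exists E s' f.
exists z; first by rewrite /equilibrium fz (stable_of_phi_min fz zmin).
rewrite leqNgt; apply/negP => overloaded.
pose R := [set h | connect (handover E s' z) f h].
have fR : f \in R by rewrite inE connect0.
have R_loaded h : h \in R -> nload a f < nload z h.
  by rewrite inE => /(connect_handover_load fz zmin zfmin); apply: leq_trans.
have s'_out h : h \notin R -> s' h = s h.
  by move=> hR; rewrite ffunE; case: eqP => // hf; rewrite hf fR in hR.
have R_closed h g : h \in R -> handover E s' z h g -> g \in R.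
  by rewrite !inE => fh /connect1; apply: connect_trans.
have splice_in h : h \in R -> nload a f < nload (splice a z R) h.
  by move=> hR; apply: leq_trans (R_loaded h hR) (nload_splice_in fa s'_out R_closed hR).
have : phi (splice a z R) < phi a.
  apply: (pot_lt_dominated (f := f)); [exact: nload_le_card | exact: splice_in |].
  move=> h; case: (boolP (h \in R)) => hR; [left | right]; first exact: splice_in.
  exact: nload_splice_out hR.
by rewrite ltnNge (a_min s'U (feasible_splice fa fz s'_out)).
Qed.

(* After a deviation, the clients choose the equilibrium least favourable to
   the deviating facility. *)
Definition deviator (s' : {ffun F -> V}) : option F := [pick g | s' g != s g].

Definition response (s' : {ffun F -> V}) (z : {ffun V -> option F}) : bool :=
  equilibrium E s' z &&
  if deviator s' is Some g
  then [forall z2, equilibrium E s' z2 ==> (nload z g <= nload z2 g)]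
  else z == a.

Lemma deviator_upd f x : upd s f x != s -> deviator (upd s f x) = Some f.
Proof.
move=> moved; rewrite /deviator; case: pickP => [g | same].
  by rewrite ffunE; case: (g =P f) => [-> | _]; rewrite ?eqxx.
by case/eqP: moved; apply/ffunP => g; apply/eqP/negbFE/same.
Qed.

Lemma response_exists s' : equilibrium E s a -> exists z, response s' z.
Proof.
move=> ea; rewrite /response /deviator; case: pickP => [g _ | same].
  have [z0 ez0] := equilibrium_exists E s'.
  case: (arg_minnP (@nload V F ^~ g) ez0) => z ez zmin; exists z; rewrite ez /=.
  by apply/forallP => z2; apply/implyP; apply: zmin.
exists a; have -> : s' = s by apply/ffunP => g; apply/eqP/negbFE/same.
by rewrite ea eqxx.
Qed.

Lemma response_self z : response s z -> z = a.
Proof.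
rewrite /response /deviator; case: pickP => [g | _ /andP[_ /eqP //]].
by rewrite eqxx.
Qed.

Lemma response_deviation f x z : x \in U f -> response (upd s f x) z -> nload z f <= nload a f.
Proof.
move=> xU; have [z' ez' z'f] := deviation_equilibrium xU.
case: (upd s f x =P s) => [-> /response_self -> // | /eqP moved].
rewrite /response deviator_upd // => /andP[_ /forallP/(_ z')].
by rewrite ez' => /leq_trans; apply.
Qed.

End Deviation.

Local Open Scope ring_scope.

Section PureProfiles.
Variables (V F : finType) (E : rel V) (w : V -> rat) (s : {ffun F -> V}).
Implicit Types (a : {ffun V -> option F}) (v : V) (h g k : F).

Definition profile_of a : V -> F -> rat := fun v g => (a v == Some g)%:R.

Lemma cost_set_row c v p :
  cost E w s (set_row c v p) v = w v + \sum_(f in Ns E s v) p f * load_minus w c v f.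
Proof.
rewrite /cost /set_row eqxx; congr (_ + _); apply: eq_bigr => f _; congr (_ * _).
by apply: eq_bigr => u /negbTE ->.
Qed.

Lemma sum_profile_row a v h (A : {set F}) (G : F -> rat) :
  a v = Some h -> h \in A -> \sum_(g in A) profile_of a v g * G g = G h.
Proof.
move=> av hA; rewrite (bigD1 h) //= big1 ?addr0 => [|g /andP[_ gh]].
  by rewrite /profile_of av eqxx mul1r.
by rewrite /profile_of av (inj_eq (@Some_inj _)) eq_sym (negbTE gh) mul0r.
Qed.

Lemma valid_dist_profile_of a v : feasible E s a -> valid_dist E s v (profile_of a v).
Proof.
move=> fa; split; [|split].
- by move=> g; rewrite /profile_of; case: (_ == _); rewrite /= ?lexx ?ler01.
- move=> g gN; rewrite /profile_of; case: eqP => // av.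
  by rewrite (feasible_some fa av) in gN.
- move=> nz; case av: (a v) => [h|]; last by rewrite (feasible_none fa av) eqxx in nz.
  rewrite -[RHS](sum_profile_row (fun=> 1) av (feasible_some fa av)).
  by apply: eq_bigr => g _; rewrite mulr1.
Qed.

Hypothesis w1 : forall v, w v = 1.

Lemma load_profile_of a k : load w (profile_of a) k = (nload a k)%:R.
Proof. by rewrite /load /nload natr_sum; apply: eq_bigr => v _; rewrite w1 mulr1. Qed.

Lemma load_minus_profile_of a v k :
  load_minus w (profile_of a) v k = (nload a k)%:R - (a v == Some k)%:R.
Proof.
rewrite /load_minus /nload [in RHS](bigD1 v) //= natrD natr_sum addrAC subrr add0r.
by apply: eq_bigr => u _; rewrite w1 mulr1.
Qed.

Lemma client_eq_profile_of a : equilibrium E s a -> client_eq E w s (profile_of a).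
Proof.
move=> /andP[fa /stableP stable_a].
split=> [v | v p [p01 [_ psum]]]; first exact: valid_dist_profile_of.
rewrite cost_set_row /cost; apply/negP; rewrite -leNgt lerD2l.
case av: (a v) => [h|]; last by rewrite (feasible_none fa av) !big_set0.
have hv := feasible_some fa av.
have lm_min g : g \in Ns E s v ->
    load_minus w (profile_of a) v h <= load_minus w (profile_of a) v g.
  move=> gv; rewrite !load_minus_profile_of av eqxx (inj_eq (@Some_inj _)).
  case: (eqVneq h g) => [-> | hg]; first exact: lexx.
  by rewrite subr0 lerBlDr -natrD ler_nat addn1 (stable_a v h g).
have nz : Ns E s v != set0 by apply/set0Pn; exists h.
rewrite (sum_profile_row _ av hv) -[X in X <= _]mul1r -(psum nz) mulr_suml.
by apply: ler_sum => g gv; rewrite ler_wpM2l ?lm_min //; case/andP: (p01 g).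
Qed.

End PureProfiles.

Theorem mainTheorem1 (V F : finType) (E : rel V) (w : V -> rat) (U : F -> {set V}) :
  (forall v, w v = 1) ->
  (forall f, U f != set0) ->
  exists (s : {ffun F -> V}) (sigma : {ffun F -> V} -> V -> F -> rat),
    is_SPE E w U s sigma /\ pure_full_profile U sigma.
Proof.
move=> w1 /(phi_min_placement_exists E) [s [a [sU fa a_min]]].
have ea : equilibrium E s a.
  by rewrite /equilibrium fa (stable_of_phi_min fa (fun a2 => a_min s a2 sU)).
have [resp respP] := fin_all_exists (fun s' => response_exists s' ea).
exists s, (fun s' => profile_of (resp s')); split; last first.
  by move=> s' _ v g; rewrite /profile_of; case: eqP; [right | left].
split=> //; split=> [s' _ | f x xU].
  by case/andP: (respP s') => es' _; apply: client_eq_profile_of.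
apply/negP; rewrite !load_profile_of // ltr_nat -leqNgt (response_self (respP s)).
exact (response_deviation sU fa a_min xU (respP _)).
Qed.
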